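(* Suppose $d\mid n$ and $d=d_1\cdots d_l$ with integers $d_1,\dots,d_l>1$ and $l>1$. Regard the iterated wreath product $\Sigma_{d_1}\wr\cdots\wr\Sigma_{d_l}$ as a subgroup of $\Sigma_n$ via $\Sigma_{d_1}\wr\cdots\wr\Sigma_{d_l}\hookrightarrow\Sigma_d\xrightarrow{\Delta}(\Sigma_d)^{n/d}\hookrightarrow\Sigma_n$, with $\Delta$ the diagonal embedding. Then the fixed point space $|\Pi_n|^{\Sigma_{d_1}\wr\cdots\wr\Sigma_{d_l}}$ is collapsible.
   Context: $\Pi_n$ is the poset of proper nontrivial partitions of $\{1,\dots,n\}$ ordered by refinement, $|\Pi_n|$ the realisation of its order complex with its $\Sigma_n$-action. The wreath product $\Sigma_a\wr\Sigma_b=(\Sigma_a)^b\rtimes\Sigma_b$ acts on $ab$ points, iterated in the standard way. *)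

From mathcomp Require Import all_boot all_fingroup.
Set Implicit Arguments. Unset Strict Implicit. Unset Printing Implicit Defensive.

Definition complex (V : finType) := {set V} -> Prop.

Definition free_pair (V : finType) (K : complex V) (sigma tau : {set V}) : Prop :=
  [/\ K sigma, K tau, sigma \proper tau, #|tau| = #|sigma|.+1 &
      forall s, K s -> sigma \proper s -> s = tau].

Definition elem_collapse (V : finType) (K L : complex V) : Prop :=
  exists sigma tau, free_pair K sigma tau /\
    forall s, L s <-> (K s /\ s <> sigma /\ s <> tau).

Inductive collapses (V : finType) : complex V -> complex V -> Prop :=
| collapses_refl K L : (forall s, K s <-> L s) -> collapses K L
| collapses_step K K' L : elem_collapse K K' -> collapses K' L -> collapses K L.

Definition collapsible (V : finType) (K : complex V) : Prop :=
  exists v : V, collapses K (fun s => s = [set v]).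

Definition order_complex (V : finType) (P : pred V) (le : rel V) : complex V :=
  fun s => [/\ s != set0, {subset s <= P} &
              forall x y, x \in s -> y \in s -> le x y || le y x].

(* The subcomplex of simplices fixed (pointwise) by every element of a
   family H acting via act.  Since the action is order-preserving, its
   realisation is the fixed point space of the realisation. *)
Definition fixed_complex (G : Type) (V : finType) (K : complex V)
    (act : G -> V -> V) (H : G -> Prop) : complex V :=
  fun s => K s /\ forall h, H h -> forall v, v \in s -> act h v = v.

Definition partn (n : nat) := {set {set 'I_n}}.

Definition discrete_part n : partn n := [set [set x] | x : 'I_n].
Definition indiscrete_part n : partn n := [set [set: 'I_n]].

Definition Pi (n : nat) : pred (partn n) :=
  fun P => [&& partition P [set: 'I_n], P != discrete_part n & P != indiscrete_part n].

Definition refines (n : nat) : rel (partn n) :=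
  fun P Q => [forall B in P, [exists C in Q, B \subset C]].

Definition part_act (n : nat) (g : {perm 'I_n}) (P : partn n) : partn n :=
  [set (g @: B) | B : {set 'I_n} in P].

(* ds = [:: d_1; ...; d_l]; points of {0..d-1}, d = d_1*...*d_l, are written in
   mixed radix with digit k (0-based) in [0, d_(k+1)), digit 0 least significant.
   Sigma_{d_1} wr ... wr Sigma_{d_l} consists of the g such that the k-th digit of
   g x is sigma_{k,c}(k-th digit of x) where c = the digits of x above k and
   each sigma_{k,c} is a permutation of [0, d_(k+1)). *)
Definition radix (ds : seq nat) (k : nat) : nat := \prod_(j < k) nth 1 ds j.
Definition digit (ds : seq nat) (k x : nat) : nat := (x %/ radix ds k) %% nth 1 ds k.
Definition high (ds : seq nat) (k x : nat) : nat := x %/ radix ds k.+1.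

Definition in_wreath (ds : seq nat) (g : nat -> nat) : Prop :=
  let d := \prod_(i <- ds) i in
  (forall x, x < d -> g x < d) /\
  exists sigma : nat -> nat -> nat -> nat,
    (forall k c, k < size ds ->
       (forall i, i < nth 1 ds k -> sigma k c i < nth 1 ds k) /\
       (forall i j, i < nth 1 ds k -> j < nth 1 ds k -> sigma k c i = sigma k c j -> i = j)) /\
    (forall x, x < d -> forall k, k < size ds ->
       digit ds k (g x) = sigma k (high ds k x) (digit ds k x)).

(* image in Sigma_n via Sigma_d --diag--> (Sigma_d)^(n/d) --> Sigma_n,
   the (n/d) copies acting on the consecutive blocks [q*d, (q+1)*d). *)
Definition in_wreath_Sn (ds : seq nat) (n : nat) (h : {perm 'I_n}) : Prop :=
  let d := \prod_(i <- ds) i in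
  exists g, in_wreath ds g /\
    forall x : 'I_n, (h x : nat) = (x %/ d) * d + g (x %% d).

From Pilot Require Import Defs.
From mathcomp Require Import all_boot all_fingroup zify boolp.
Set Implicit Arguments. Unset Strict Implicit. Unset Printing Implicit Defensive.

(* Let T be the partition of {0, ..., n-1} according to the top digit of x mod d,
   i.e. the block of the outermost factor Sigma_(d_l).  T is fixed by the whole wreath
   product, and for every fixed P in Pi_n the meet P /\ T is again fixed and proper.
   Properness is the point: if P joins u <> v with different top digits, the element
   of the bottom factor Sigma_(d_1) that changes the lowest digit of u fixes v, so P
   also joins u to its image, which has the same top digit as u.  Hence P |-> P /\ T
   is a retraction of the fixed poset onto the elements below T.  Removing first the
   elements not below T, each time one with the smallest down-set (its meet with T is
   then a down beat), and then the elements below T other than T (up beats), collapses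
   the order complex to the vertex T; removing a beat point y with beat z is a sequence
   of elementary collapses of the pairs (s, s U {z}) with y in s and z not in s,
   largest s first. *)

Definition eq_complex (V : finType) (K L : complex V) := forall s, K s <-> L s.

Lemma elem_collapse_ext (V : finType) (K K' L L' : complex V) :
  eq_complex K K' -> eq_complex L L' -> elem_collapse K L -> elem_collapse K' L'.
Proof.
move=> eqK eqL [sg [tau [[Ksg Ktau sg_tau card_tau tau_unique] defL]]].
exists sg, tau; split; first by split=> //; [apply/eqK | apply/eqK | move=> s /eqK /tau_unique].
by move=> s; rewrite -eqL defL eqK.
Qed.

Lemma collapses_ext (V : finType) (K K' L L' : complex V) :
  eq_complex K K' -> eq_complex L L' -> collapses K L -> collapses K' L'.
Proof.
move=> + + KL; elim: KL K' L' => {K L} [K L eqKL | K K1 L KK1 _ IH] K' L' eqK eqL.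
  by apply: collapses_refl => s; rewrite -eqK eqKL eqL.
by apply: (collapses_step (elem_collapse_ext eqK (fun=> iff_refl _) KK1)); apply: IH.
Qed.

Lemma collapses_trans (V : finType) (K L M : complex V) :
  collapses K L -> collapses L M -> collapses K M.
Proof.
elim=> {K L} [K L eqKL | K K1 L KK1 _ IH] LM; last exact: collapses_step KK1 (IH LM).
by apply: collapses_ext LM => // s; rewrite eqKL.
Qed.

Lemma setD1_notin (T : finType) (A : {set T}) z : z \notin A -> A :\ z = A.
Proof. by move=> zA; apply/setDidPl; rewrite disjoint_sym disjoints1. Qed.

Lemma eq_setD1 (T : finType) (A B : {set T}) z :
  z \notin B -> (A :\ z == B) = (A == B) || (A == z |: B).
Proof.
move=> zB; apply/eqP/orP => [<- | [] /eqP ->]; last 2 first.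
- exact: setD1_notin.
- exact: setU1K.
by case: (boolP (z \in A)) => zA; [right; rewrite setD1K | left; rewrite setD1_notin].
Qed.

Section OrderComplex.
Variables (V : finType) (le : rel V).

Definition chainb (F s : {set V}) : bool :=
  [&& s != set0, s \subset F & [forall x in s, forall y in s, le x y || le y x]].

Definition chain_complex (F : {set V}) : complex V := fun s => chainb F s.

Lemma chainbD1 F y s : chainb (F :\ y) s = chainb F s && (y \notin s).
Proof. by rewrite /chainb subsetD1 -!andbA; congr [&& _, _ & _]; rewrite andbC. Qed.

Lemma chainb_sub (F s t : {set V}) : chainb F s -> t \subset s -> t != set0 -> chainb F t.
Proof.
case/and3P=> _ sF /forall_inP s_chain ts t0; rewrite /chainb t0 (subset_trans ts sF) /=.
apply/forall_inP=> x xt; apply/forall_inP=> w wt.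
by move/forall_inP: (s_chain x (subsetP ts _ xt)); apply; apply: (subsetP ts).
Qed.

Hypothesis le_refl : reflexive le.
Hypothesis le_trans : transitive le.

Lemma chain_complex_set1 c : eq_complex (chain_complex [set c]) (fun s => s = [set c]).
Proof.
move=> s; split=> [/and3P [s0 /subsetP sc _] | ->].
  apply/eqP; rewrite eqEsubset; apply/andP; split; first exact/subsetP.
  by case/set0Pn: s0 => x xs; move/sc: (xs); rewrite inE => /eqP <-; rewrite sub1set.
apply/and3P; split; first by apply/set0Pn; exists c; rewrite inE.
  exact: subxx.
by apply/forall_inP=> x /set1P ->; apply/forall_inP=> w /set1P ->; rewrite le_refl.
Qed.

Section DownBeat.
Variables (F : {set V}) (y z : V).
Hypotheses (Fz : z \in F) (neq_zy : z != y) (le_zy : le z y).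
Hypothesis beat : forall w, w \in F -> w != y -> le w y -> le w z.

Lemma chainbU1_beat s : chainb F s -> y \in s -> chainb F (z |: s).
Proof.
case/and3P=> _ sF /forall_inP s_chain ys.
have z_cmp w : w \in s -> le w z || le z w.
  move=> ws; have [-> | wy] := eqVneq w y; first by rewrite le_zy orbT.
  have /forall_inP/(_ y ys)/orP[wley | ylew] := s_chain _ ws.
    by rewrite beat // (subsetP sF).
  by rewrite (le_trans le_zy ylew) orbT.
apply/and3P; split; first by apply/set0Pn; exists z; rewrite !inE eqxx.
  by rewrite subUset sub1set Fz sF.
apply/forall_inP=> a /setU1P[-> | sa]; apply/forall_inP=> b /setU1P[-> | sb].
- by rewrite le_refl.
- by rewrite orbC z_cmp.
- by rewrite z_cmp.
by move/forall_inP: (s_chain _ sa); apply.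
Qed.

Definition lower_face s := [&& chainb F s, y \in s & z \notin s].

(* [stage A] keeps a face [s] through [y] only while [s :\ z \in A]: removing a
   largest lower face [s] from [A] is the elementary collapse of the pair
   [(s, z |: s)]. *)
Let stage (A : {set {set V}}) : complex V :=
  fun s => chainb F s /\ (y \in s -> s :\ z \in A).

Lemma lower_faceD1 s : chainb F s -> y \in s -> lower_face (s :\ z).
Proof.
move=> Fs ys; rewrite /lower_face !inE eqxx ys /= andbT eq_sym neq_zy /= andbT.
apply: chainb_sub Fs (subsetDl _ _) _; apply/set0Pn; exists y.
by rewrite !inE ys eq_sym neq_zy.
Qed.

Lemma stage_done (A : {set {set V}}) : [set s in A | lower_face s] = set0 ->
  eq_complex (stage A) (chain_complex (F :\ y)).
Proof.
move=> no_lower_face s; rewrite /chain_complex chainbD1; split=> [[Fs As] | /andP[Fs ys]].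
  apply/andP; split=> //; apply/negP=> ys.
  suff : s :\ z \in [set s in A | lower_face s] by rewrite no_lower_face inE.
  by rewrite inE As // lower_faceD1.
by split=> // /(negP ys).
Qed.

Lemma stage_elem_collapse (A : {set {set V}}) sg : sg \in A -> lower_face sg ->
  (forall s, s \in A -> lower_face s -> #|s| <= #|sg|) ->
  elem_collapse (stage A) (stage (A :\ sg)).
Proof.
move=> sgA /and3P[Fsg ysg zsg] sg_max.
have sgD1 (s : {set V}) := eq_setD1 s zsg.
exists sg, (z |: sg); split; first split.
- by split=> // _; rewrite setD1_notin.
- by split; [apply: chainbU1_beat | rewrite setU1K].
- by rewrite properUr // sub1set.
- by rewrite cardsU1 zsg.
- move=> s [Fs As] sg_s; have ys := subsetP (proper_sub sg_s) _ ysg.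
  have sg_sD1 : sg \subset s :\ z by rewrite subsetD1 (proper_sub sg_s).
  have : s :\ z == sg by rewrite eq_sym eqEcard sg_sD1 sg_max ?lower_faceD1 ?As.
  rewrite sgD1 => /orP[/eqP s_sg | /eqP //].
  by move: sg_s; rewrite s_sg properxx.
move=> s; split=> [[Fs As] | [[Fs As] [s_sg s_zsg]]].
  have [ys | nys] := boolP (y \in s).
    have /setD1P[+ sD1A] := As ys; rewrite sgD1 negb_or => /andP[/eqP s_sg /eqP s_zsg].
    by split; [split=> // _ | split].
  have s_sg : s <> sg by move=> s_eq; rewrite s_eq ysg in nys.
  have s_zsg : s <> z |: sg by move=> s_eq; rewrite s_eq !inE ysg orbT in nys.
  by split; [split=> // /(negP nys) | split].
split=> // ys; rewrite !inE As // andbT sgD1 // negb_or.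
by apply/andP; split; apply/eqP.
Qed.

Lemma stage_collapses (A : {set {set V}}) : collapses (stage A) (chain_complex (F :\ y)).
Proof.
have [k] := ubnP #|[set s in A | lower_face s]|; elim: k A => // k IH A.
case: (set_0Vmem [set s in A | lower_face s]) => [no_lower_face _ | [s0 s0_lower_face] lt_k].
  exact/collapses_refl/stage_done.
have [sg /setIdP[sgA sg_lower_face] sg_max] := arg_maxnP (fun s : {set V} => #|s|) s0_lower_face.
apply: collapses_step (stage_elem_collapse sgA sg_lower_face _) (IH _ _).
  by move=> s sA s_lower_face; apply: sg_max; apply/setIdP.
have -> : [set s in A :\ sg | lower_face s] = [set s in A | lower_face s] :\ sg.
  by apply/setP=> s; rewrite !inE andbA.
by rewrite -ltnS (leq_trans _ lt_k) // ltnS [X in _ < X](cardsD1 sg) !inE sgA sg_lower_face.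
Qed.

Lemma collapses_down_beat : collapses (chain_complex F) (chain_complex (F :\ y)).
Proof.
apply: collapses_ext (stage_collapses setT) => // s.
by split=> [[] // | Fs]; split=> // _; rewrite inE.
Qed.

End DownBeat.
End OrderComplex.

Lemma chainb_flip (V : finType) (le : rel V) F s :
  chainb (fun x y => le y x) F s = chainb le F s.
Proof.
rewrite /chainb; congr [&& _, _ & _]; apply/eq_forallb_in=> x _.
by apply/eq_forallb_in=> w _; rewrite orbC.
Qed.

Section Retraction.
Variables (V : finType) (le : rel V).
Hypotheses (le_refl : reflexive le) (le_trans : transitive le).

Lemma collapses_up_beat (F : {set V}) y z :
  z \in F -> z != y -> le y z ->
  (forall w, w \in F -> w != y -> le y w -> le z w) ->
  collapses (chain_complex le F) (chain_complex le (F :\ y)).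
Proof.
move=> Fz zy yz beat; pose ge x y := le y x.
have ge_trans : transitive ge by move=> a b c ab bc; apply: le_trans bc ab.
have := @collapses_down_beat V ge le_refl ge_trans F y z Fz zy yz beat.
by apply: collapses_ext => s; rewrite /chain_complex chainb_flip.
Qed.

Let down (F : {set V}) y := [set w in F | le w y].

Lemma down_proper (F : {set V}) w y : {in F &, antisymmetric le} ->
  w \in F -> y \in F -> w != y -> le w y -> down F w \proper down F y.
Proof.
move=> antiF Fw Fy wy le_wy; rewrite properE; apply/andP; split.
  by apply/subsetP=> x; rewrite !inE => /andP[-> /le_trans->].
apply/subsetP=> /(_ y); rewrite !inE Fy le_refl => /(_ isT) /andP[_ le_yw].
by move/eqP: wy; apply; apply: antiF; rewrite ?le_wy.
Qed.

Lemma collapses_to_top (F : {set V}) c :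
  {in F &, antisymmetric le} -> c \in F -> {in F, forall x, le x c} ->
  collapses (chain_complex le F) (fun s => s = [set c]).
Proof.
have [k] := ubnP #|F|; elim: k F => // k IH F ltFk antiF Fc top_c.
case: (set_0Vmem (F :\ c)) => [Fc0 | [y0 Fy0]].
  suff -> : F = [set c] by apply/collapses_refl/chain_complex_set1.
  by apply/eqP; rewrite eqEsubset sub1set Fc andbT -setD_eq0 Fc0.
have [y /setD1P[yc Fy] y_max] := arg_maxnP (fun y => #|down F y|) Fy0.
apply: collapses_trans (collapses_up_beat Fc _ (top_c y Fy) _) (IH _ _ _ _ _).
- by rewrite eq_sym.
- move=> w Fw wy le_yw; have [-> // | wc] := eqVneq w c.
  have /y_max /= : w \in F :\ c by rewrite !inE wc Fw.
  by rewrite leqNgt proper_card // down_proper // eq_sym.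
- by rewrite (cardsD1 y F) Fy in ltFk.
- by apply: sub_in2 antiF => x /setD1P[].
- by rewrite !inE eq_sym yc.
by move=> x /setD1P[_ /top_c].
Qed.

Lemma collapses_to_meet_point (F : {set V}) c (meet : V -> V) :
  {in F &, antisymmetric le} -> c \in F ->
  (forall y, y \in F -> [/\ meet y \in F, le (meet y) y, le (meet y) c &
      forall w, w \in F -> le w y -> le w c -> le w (meet y)]) ->
  collapses (chain_complex le F) (fun s => s = [set c]).
Proof.
have [k] := ubnP #|F|; elim: k F => // k IH F ltFk antiF Fc meetP.
case: (set_0Vmem [set y in F | ~~ le y c]) => [all_le | [y0 Fy0]].
  apply: collapses_to_top => // y Fy; apply: contraT => nle_yc.
  by have := in_set0 y; rewrite -all_le inE Fy nle_yc.
have [y /setIdP[Fy nle_yc] y_min] := arg_minnP (fun y => #|down F y|) Fy0.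
have [Fmy my_y my_c my_max] := meetP y Fy.
have my_neq : meet y != y by apply: contraNneq nle_yc => <-.
apply: collapses_trans (collapses_down_beat le_refl le_trans Fmy my_neq my_y _)
  (IH _ _ _ _ _).
- move=> w Fw wy le_wy; apply: my_max => //; apply: contraT => nle_wc.
  have /y_min /= : w \in [set y in F | ~~ le y c] by rewrite inE Fw nle_wc.
  by rewrite leqNgt proper_card // down_proper.
- by rewrite (cardsD1 y F) Fy in ltFk.
- by apply: sub_in2 antiF => x /setD1P[].
- by rewrite !inE Fc andbT; apply: contraNneq nle_yc => <-.
move=> w /setD1P[_ Fw]; have [Fmw mw_w mw_c mw_max] := meetP w Fw; split=> //.
- by rewrite !inE Fmw andbT; apply: contraNneq nle_yc => <-.
by move=> u /setD1P[_ Fu]; apply: mw_max.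
Qed.

End Retraction.

Section Partitions.
Variable n : nat.
Local Notation partn := Defs.partn.
Implicit Types (P Q W : partn n) (x y : 'I_n).
Local Notation is_partn P := (partition P [set: 'I_n]).

Definition same_block P x y := pblock P x == pblock P y.

Lemma same_block_refl P x : same_block P x x.
Proof. exact: eqxx. Qed.

Lemma partn_cover P x : is_partn P -> x \in cover P.
Proof. by case/and3P=> /eqP-> _ _; rewrite inE. Qed.

Lemma same_blockE P x y : is_partn P -> same_block P x y = (y \in pblock P x).
Proof. by move=> partP; rewrite /same_block eq_pblock ?partn_cover //; case/and3P: partP. Qed.

Lemma eq_partn P Q : is_partn P -> is_partn Q ->
  (forall x y, same_block P x y = same_block Q x y) -> P = Q.
Proof.
move=> partP partQ eqPQ.
rewrite -(equivalence_partition_pblock partP) -(equivalence_partition_pblock partQ).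
apply: eq_imset => x; apply/setP=> y.
by rewrite !inE -!same_blockE ?eqPQ.
Qed.

Lemma refinesP P Q : is_partn P -> is_partn Q ->
  refines P Q <-> (forall x y, same_block P x y -> same_block Q x y).
Proof.
move=> partP partQ; have trivP := partition_trivIset partP.
split=> [/forall_inP PQ x y | PQ].
  have /PQ /exists_inP[C QC PxC] := pblock_mem (partn_cover x partP).
  have xC : x \in C by rewrite (subsetP PxC) // mem_pblock partn_cover.
  rewrite !same_blockE // (def_pblock (partition_trivIset partQ) QC xC).
  exact: (subsetP PxC).
apply/forall_inP=> B PB; apply/exists_inP.
have /set0Pn[x xB] : B != set0 by apply: partition_neq0 partP PB.
exists (pblock Q x); first exact/pblock_mem/partn_cover.
apply/subsetP=> y yB; rewrite -same_blockE //; apply: PQ.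
by rewrite same_blockE // (def_pblock trivP PB xB).
Qed.

Lemma refines_refl P : refines P P.
Proof. by apply/forall_inP=> B PB; apply/exists_inP; exists B. Qed.

Lemma refines_trans : transitive (@refines n).
Proof.
move=> Q P W /forall_inP PQ /forall_inP QW; apply/forall_inP=> B PB.
have /exists_inP[C QC BC] := PQ B PB; have /exists_inP[D WD CD] := QW C QC.
by apply/exists_inP; exists D => //; apply: subset_trans CD.
Qed.

Lemma part_act_partition (h : {perm 'I_n}) P : is_partn P -> is_partn (part_act h P).
Proof.
move=> partP; have -> : [set: 'I_n] = h @: [set: 'I_n].
  by apply/esym/eqP; rewrite eqEcard subsetT (card_imset _ (@perm_inj _ h)) leqnn.
by rewrite /part_act imset_partition //; exact: perm_inj.
Qed.

Lemma same_block_part_act (h : {perm 'I_n}) P x y : is_partn P ->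
  same_block (part_act h P) (h x) (h y) = same_block P x y.
Proof.
move=> partP; have covP := partn_cover x partP.
have partA := part_act_partition h partP.
rewrite !same_blockE //.
have -> : pblock (part_act h P) (h x) = h @: pblock P x.
  apply: def_pblock; first exact: partition_trivIset partA.
    by apply: imset_f; apply: pblock_mem.
  by apply: imset_f; rewrite mem_pblock.
by rewrite mem_imset //; exact: perm_inj.
Qed.

Lemma part_act_fixedP (h : {perm 'I_n}) P : is_partn P ->
  part_act h P = P <-> forall x y, same_block P (h x) (h y) = same_block P x y.
Proof.
move=> partP; split=> [fixP x y | fixP].
  by rewrite -[in LHS]fixP same_block_part_act.
apply: eq_partn => //; first exact: part_act_partition.
by move=> x y; rewrite -(permKV h x) -(permKV h y) same_block_part_act // fixP.
Qed.

Lemma same_block_preim (rT : eqType) (f : 'I_n -> rT) x y :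
  same_block (preim_partition f [set: 'I_n]) x y = (f x == f y).
Proof.
rewrite same_blockE ?preim_partitionP // pblock_equivalence_partition ?inE //.
by move=> a b c _ _ _; split=> // /eqP->.
Qed.

Lemma refines_anti P Q : is_partn P -> is_partn Q -> refines P Q -> refines Q P -> P = Q.
Proof.
move=> partP partQ /(refinesP partP partQ) PQ /(refinesP partQ partP) QP.
by apply: eq_partn => // x y; apply/idP/idP => [/PQ | /QP].
Qed.

Lemma discrete_partE : discrete_part n = preim_partition id [set: 'I_n].
Proof.
apply/setP=> B; apply/imsetP/imsetP => -[z _ ->]; exists z => //;
  by apply/setP=> y; rewrite !inE eq_sym.
Qed.

Lemma same_block_discrete x y : same_block (discrete_part n) x y = (x == y).
Proof. by rewrite discrete_partE same_block_preim. Qed.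

Lemma discrete_partN P : is_partn P -> P != discrete_part n ->
  exists u v, u != v /\ same_block P u v.
Proof.
move=> partP P_ndisc.
have /existsP[u /existsP[v /andP[uv Puv]]] :
    [exists u, exists v, (u != v) && same_block P u v]; last by exists u, v.
apply: contraNT P_ndisc => /existsPn P_disc; apply/eqP/eq_partn => //.
  by rewrite discrete_partE preim_partitionP.
move=> x y; rewrite same_block_discrete; have [-> | xy] := eqVneq x y.
  exact: same_block_refl.
by apply/negbTE; have /existsPn/(_ y) := P_disc x; rewrite xy.
Qed.

Lemma neq_discrete_part P x y : same_block P x y -> x != y -> P != discrete_part n.
Proof.
by move=> Pxy; apply: contra_neq => P_disc; apply/eqP; rewrite -same_block_discrete -P_disc.
Qed.

Lemma same_block_indiscrete x y : same_block (indiscrete_part n) x y.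
Proof. by rewrite /same_block !(def_pblock (trivIset1 _) (set11 _)) ?inE. Qed.

Lemma neq_indiscrete_part P x y : ~~ same_block P x y -> P != indiscrete_part n.
Proof. by apply: contraNneq => ->; apply: same_block_indiscrete. Qed.

Definition partn_meet P Q : partn n :=
  preim_partition (fun x => (pblock P x, pblock Q x)) [set: 'I_n].

Lemma same_block_meet P Q x y :
  same_block (partn_meet P Q) x y = same_block P x y && same_block Q x y.
Proof. by rewrite same_block_preim xpair_eqE. Qed.

Lemma refines_meetl P Q : is_partn P -> refines (partn_meet P Q) P.
Proof.
move=> partP; apply/(refinesP (preim_partitionP _ _) partP) => x y.
by rewrite same_block_meet => /andP[].
Qed.

Lemma refines_meetr P Q : is_partn Q -> refines (partn_meet P Q) Q.
Proof.
move=> partQ; apply/(refinesP (preim_partitionP _ _) partQ) => x y.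
by rewrite same_block_meet => /andP[].
Qed.

Lemma refines_meet W P Q : is_partn W -> is_partn P -> is_partn Q ->
  refines W P -> refines W Q -> refines W (partn_meet P Q).
Proof.
move=> partW partP partQ /(refinesP partW partP) WP /(refinesP partW partQ) WQ.
apply/(refinesP partW (preim_partitionP _ _)) => x y Wxy.
by rewrite same_block_meet WP ?WQ.
Qed.

Lemma part_act_meet (h : {perm 'I_n}) P Q : is_partn P -> is_partn Q ->
  part_act h P = P -> part_act h Q = Q -> part_act h (partn_meet P Q) = partn_meet P Q.
Proof.
move=> partP partQ /(part_act_fixedP h partP) hP /(part_act_fixedP h partQ) hQ.
by apply/part_act_fixedP; [exact: preim_partitionP | move=> x y; rewrite !same_block_meet hP hQ].
Qed.

End Partitions.

Lemma radix0 ds : radix ds 0 = 1.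
Proof. by rewrite /radix big_ord0. Qed.

Lemma radix_cons e ds k : radix (e :: ds) k.+1 = e * radix ds k.
Proof. by rewrite /radix big_ord_recl. Qed.

Lemma radix_recr ds k : radix ds k.+1 = radix ds k * nth 1 ds k.
Proof. by rewrite /radix big_ord_recr. Qed.

Lemma radix_size ds : radix ds (size ds) = \prod_(i <- ds) i.
Proof. by elim: ds => [|e ds IH]; rewrite ?radix0 ?big_nil //= radix_cons IH big_cons. Qed.

Lemma radix_gt0 ds k : all (fun di => 1 < di) ds -> 0 < radix ds k.
Proof.
move=> /(all_nthP 1) ds_gt1; apply: prodn_gt0 => i.
by case: (ltnP i (size ds)) => [/ds_gt1 /ltnW | /(nth_default 1)->].
Qed.

Lemma digit_cons0 e ds y : digit (e :: ds) 0 y = y %% e.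
Proof. by rewrite /digit radix0 divn1. Qed.

Lemma digit_consS e ds k y : digit (e :: ds) k.+1 y = digit ds k (y %/ e).
Proof. by rewrite /digit radix_cons divnMA. Qed.

Lemma high_cons0 e ds y : high (e :: ds) 0 y = y %/ e.
Proof. by rewrite /high radix_cons radix0 muln1. Qed.

Section DiagonalPerm.
Variables (n d : nat) (g : nat -> nat).
Hypotheses (d_gt0 : 0 < d) (d_dvd_n : d %| n).
Hypothesis g_lt : forall x, x < d -> g x < d.
Hypothesis g_inj : forall x y, x < d -> y < d -> g x = g y -> x = y.

Lemma diag_fun_lt (x : 'I_n) : x %/ d * d + g (x %% d) < n.
Proof.
have : x %/ d < n %/ d by rewrite ltn_divLR // divnK.
have : g (x %% d) < d by rewrite g_lt ?ltn_mod.
have := divnK d_dvd_n; nia.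
Qed.

Definition diag_fun (x : 'I_n) : 'I_n := Ordinal (diag_fun_lt x).

Lemma diag_fun_inj : injective diag_fun.
Proof.
move=> x y /(congr1 val) /= eq_xy.
have gx : g (x %% d) < d by rewrite g_lt ?ltn_mod.
have gy : g (y %% d) < d by rewrite g_lt ?ltn_mod.
have eq_mod : x %% d = y %% d.
  apply: g_inj; rewrite ?ltn_mod //.
  by have := congr1 (modn^~ d) eq_xy; rewrite /= !modnMDl (modn_small gx) (modn_small gy).
have eq_div : x %/ d = y %/ d.
  by have := congr1 (divn^~ d) eq_xy; rewrite /= !divnMDl // (divn_small gx) (divn_small gy) !addn0.
by apply: val_inj; rewrite /= (divn_eq x d) (divn_eq y d) eq_div eq_mod.
Qed.

Definition diag_perm : {perm 'I_n} := perm diag_fun_inj.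

Lemma diag_permE (x : 'I_n) : (diag_perm x : nat) = x %/ d * d + g (x %% d).
Proof. by rewrite permE. Qed.

Lemma diag_perm_wreath ds : \prod_(i <- ds) i = d -> in_wreath ds g ->
  in_wreath_Sn ds diag_perm.
Proof. by move=> dsE g_wreath; exists g; rewrite dsE; split=> // x; rewrite diag_permE. Qed.

End DiagonalPerm.

Definition swapn (a b i : nat) : nat := if i == a then b else if i == b then a else i.

Lemma swapnK a b : involutive (swapn a b).
Proof.
move=> i; rewrite /swapn.
have [-> | ia] := eqVneq i a; first by case: eqVneq => [-> | _]; rewrite ?eqxx.
have [-> | ib] := eqVneq i b; first by rewrite eqxx.
by rewrite (negPf ia) (negPf ib).
Qed.

Lemma swapn_lt a b m i : a < m -> b < m -> i < m -> swapn a b i < m.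
Proof. by rewrite /swapn; case: ifP => // _; case: ifP. Qed.

Section BlockSwap.
Variables (e c a b : nat) (ds' : seq nat).
Hypotheses (a_lt : a < e) (b_lt : b < e).
Local Notation ds := (e :: ds').
Local Notation d := (\prod_(i <- ds) i).

Definition block_swap (x : nat) : nat :=
  if x %/ e == c then c * e + swapn a b (x %% e) else x.

Let e_gt0 : 0 < e.
Proof. exact: leq_ltn_trans a_lt. Qed.

Let swapn_mod x : swapn a b (x %% e) < e.
Proof. by rewrite swapn_lt // ltn_mod e_gt0. Qed.

Lemma block_swap_div x : block_swap x %/ e = x %/ e.
Proof.
rewrite /block_swap; case: ifP => // /eqP <-.
by rewrite divnMDl ?e_gt0 // (divn_small (swapn_mod x)) addn0.
Qed.

Lemma block_swap_mod x : x %/ e = c -> block_swap x %% e = swapn a b (x %% e).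
Proof. by rewrite /block_swap => ->; rewrite eqxx modnMDl modn_small ?swapn_mod. Qed.

Lemma block_swap_lt x : x < d -> block_swap x < d.
Proof.
rewrite big_cons => x_lt; rewrite /block_swap; case: ifP => // /eqP <-.
have : x %/ e < \prod_(i <- ds') i by rewrite ltn_divLR ?e_gt0 // mulnC.
have := swapn_mod x; nia.
Qed.

Lemma block_swap_inj x y : block_swap x = block_swap y -> x = y.
Proof.
move=> eq_xy; have eq_div : x %/ e = y %/ e by rewrite -block_swap_div eq_xy block_swap_div.
have [xc | xc] := eqVneq (x %/ e) c; last by move: eq_xy; rewrite /block_swap -eq_div (negPf xc).
have /(congr1 (swapn a b)) : swapn a b (x %% e) = swapn a b (y %% e).
  by rewrite -!block_swap_mod -?eq_div ?eq_xy.
by rewrite !swapnK => eq_mod; rewrite (divn_eq x e) (divn_eq y e) eq_div eq_mod.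
Qed.

Lemma block_swap_wreath : in_wreath ds block_swap.
Proof.
split; first exact: block_swap_lt.
exists (fun k c' => if (k == 0) && (c' == c) then swapn a b else id); split.
  move=> [|k] c' _ /=; last by split.
  case: eqP => _; last by split.
  by split=> [i i_lt | i j _ _ /(congr1 (swapn a b))]; rewrite ?swapn_lt ?swapnK.
move=> x _ [|k] _ /=; last by rewrite !digit_consS block_swap_div.
rewrite !digit_cons0 high_cons0; case: eqP => [xc | xc]; first exact: block_swap_mod.
by rewrite /block_swap; case: eqP.
Qed.

End BlockSwap.

Section Wreath.
Variables (n e : nat) (ds' : seq nat).
Local Notation ds := (e :: ds').
Local Notation d := (\prod_(i <- ds) i).
Local Notation l := (size ds').
Hypotheses (n_gt0 : 0 < n) (ds'_gt0 : 0 < l).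
Hypotheses (ds_gt1 : all (fun di => 1 < di) ds) (d_dvd_n : d %| n).

Let r := radix ds l.
Let dl := nth 1 ds l.

Let e_gt1 : 1 < e.
Proof. by case/andP: ds_gt1. Qed.

Let ds'_gt1 : all (fun di => 1 < di) ds'.
Proof. by case/andP: ds_gt1. Qed.

Let dl_gt1 : 1 < dl.
Proof. by apply: (all_nthP 1 ds_gt1). Qed.

Let rE : r = e * radix ds' l.-1.
Proof. by rewrite /r -(prednK ds'_gt0) radix_cons. Qed.

Let r_gt1 : 1 < r.
Proof.
by rewrite rE (leq_trans e_gt1) // leq_pmulr // radix_gt0 // ds'_gt1.
Qed.

Let dE : d = r * dl.
Proof. by rewrite -radix_size radix_recr. Qed.

Let d_gt0 : 0 < d.
Proof. by rewrite dE muln_gt0 (ltnW r_gt1) (ltnW dl_gt1). Qed.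

Definition top_digit (x : 'I_n) : nat := x %% d %/ r.

Lemma top_digit_lt x : top_digit x < dl.
Proof. by rewrite ltn_divLR ?(ltnW r_gt1) // mulnC -dE ltn_mod d_gt0. Qed.

Lemma top_digitE x : top_digit x = x %% d %/ e %/ radix ds' l.-1.
Proof. by rewrite /top_digit rE divnMA. Qed.

Lemma top_digit_wreath (h : {perm 'I_n}) : in_wreath_Sn ds h ->
  forall x y, (top_digit (h x) == top_digit (h y)) = (top_digit x == top_digit y).
Proof.
case=> g [[g_lt [sigma [sigma_perm g_digit]]] hE] x y.
have mod_lt z : z %% d < d by rewrite ltn_mod d_gt0.
have digit_top z : z < d -> digit ds l z = z %/ r.
  by move=> z_lt; rewrite /digit modn_small // ltn_divLR ?(ltnW r_gt1) // mulnC -dE.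
have top_h z : top_digit (h z) = sigma l 0 (top_digit z).
  rewrite /top_digit hE modnMDl modn_small ?g_lt // -!digit_top ?g_lt // g_digit //.
  by rewrite /high -[l.+1]/(size ds) radix_size divn_small.
have [_ sigma_inj] := sigma_perm l 0 (ltnSn l).
by rewrite !top_h; apply/eqP/eqP => [/sigma_inj | -> //]; apply; apply: top_digit_lt.
Qed.

Lemma wreath_move u : exists h : {perm 'I_n}, [/\ in_wreath_Sn ds h, h u != u,
  forall x, top_digit (h x) = top_digit x &
  forall v, top_digit v != top_digit u -> h v = v].
Proof.
pose a := u %% d %% e; pose c := u %% d %/ e.
pose b : nat := a == 0. (* any digit other than [a] *)
have e_gt0 := ltnW e_gt1.
have a_lt : a < e by rewrite ltn_mod.
have b_lt : b < e by rewrite /b; case: (a == 0); rewrite ?e_gt1.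
have swap_lt z : z < d -> block_swap e c a b z < d := @block_swap_lt e c a b ds' a_lt b_lt z.
pose h := diag_perm d_gt0 d_dvd_n swap_lt (fun x y _ _ => @block_swap_inj e c a b a_lt b_lt x y).
have h_mod x : h x %% d = block_swap e c a b (x %% d).
  by rewrite diag_permE modnMDl modn_small // swap_lt // ltn_mod d_gt0.
exists h; split.
- exact/diag_perm_wreath/block_swap_wreath.
- apply: contra_neq (_ : b != a) => [/(congr1 (fun x : 'I_n => x %% d %% e)) |].
    by rewrite h_mod (block_swap_mod a_lt b_lt) // -/a /swapn eqxx.
  by rewrite /b; case: (a =P 0) => [-> // | /eqP]; rewrite eq_sym.
- by move=> x; rewrite !top_digitE h_mod (@block_swap_div e c a b a_lt b_lt).
move=> v v_u; apply: val_inj; rewrite /= diag_permE /block_swap.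
have /negPf-> : v %% d %/ e != c by apply: contraNneq v_u; rewrite !top_digitE => ->.
by rewrite -divn_eq.
Qed.

Local Notation partn := Defs.partn.

Definition top_partition : partn n := preim_partition top_digit [set: 'I_n].

Definition wreath_fixed (P : partn n) := forall h, in_wreath_Sn ds h -> part_act h P = P.

Definition fixed_Pi : {set partn n} := [set P | Pi P && `[< wreath_fixed P >]].

Lemma fixed_PiP P : reflect (Pi P /\ wreath_fixed P) (P \in fixed_Pi).
Proof. by rewrite inE; apply: (iffP andP) => -[PiP /asboolP]. Qed.

Lemma top_partition_fixed : wreath_fixed top_partition.
Proof.
move=> h h_wreath; apply/part_act_fixedP; first exact: preim_partitionP.
by move=> x y; rewrite !same_block_preim top_digit_wreath.
Qed.

Let r_lt_d : r < d.
Proof. by rewrite dE ltn_Pmulr ?dl_gt1 // ltnW ?r_gt1. Qed.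

Let r_lt_n : r < n.
Proof. exact: leq_trans r_lt_d (dvdn_leq n_gt0 d_dvd_n). Qed.

Let o0 : 'I_n := Ordinal n_gt0.
Let o1 : 'I_n := Ordinal (ltn_trans r_gt1 r_lt_n).
Let or : 'I_n := Ordinal r_lt_n.

Let top_digit_o0 : top_digit o0 = 0.
Proof. by rewrite /top_digit mod0n div0n. Qed.

Let top_digit_o1 : top_digit o1 = 0.
Proof. by rewrite /top_digit /= modn_small ?divn_small ?r_gt1 // (ltn_trans r_gt1 r_lt_d). Qed.

Let top_digit_or : top_digit or = 1.
Proof. by rewrite /top_digit /= modn_small ?r_lt_d // divnn ltnW ?r_gt1. Qed.

Let top_o0_or : top_digit o0 != top_digit or.
Proof. by rewrite top_digit_o0 top_digit_or. Qed.

Lemma top_partition_Pi : Pi top_partition.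
Proof.
apply/and3P; split; first exact: preim_partitionP.
  by apply: (@neq_discrete_part _ _ o0 o1); rewrite // same_block_preim top_digit_o0 top_digit_o1.
by apply: (@neq_indiscrete_part _ _ o0 or); rewrite same_block_preim.
Qed.

Lemma meet_top_neq_discrete P : partition P [set: 'I_n] -> wreath_fixed P ->
  P != discrete_part n -> partn_meet P top_partition != discrete_part n.
Proof.
move=> partP P_fixed P_ndisc; have [u [v [uv Puv]]] := discrete_partN partP P_ndisc.
have same_meet_top w : same_block P u w -> top_digit u = top_digit w ->
    same_block (partn_meet P top_partition) u w.
  by move=> Puw top_uw; rewrite same_block_meet same_block_preim Puw top_uw /=.
have [top_uv | top_uv] := eqVneq (top_digit u) (top_digit v).
  exact: neq_discrete_part (same_meet_top v Puv top_uv) uv.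
have [h [/P_fixed/(part_act_fixedP h partP) hP hu top_h fix_h]] := wreath_move u.
apply: (neq_discrete_part (same_meet_top (h u) _ _)); rewrite 1?eq_sym ?top_h //.
have hv : h v = v by apply: fix_h; rewrite eq_sym.
have := hP u v; rewrite hv Puv => /eqP Phuv.
by rewrite /same_block (eqP Puv) Phuv.
Qed.

Lemma meet_top_fixed_Pi P : P \in fixed_Pi -> partn_meet P top_partition \in fixed_Pi.
Proof.
case/fixed_PiP => /and3P[partP P_ndisc _] P_fixed.
have partT : partition top_partition [set: 'I_n] := preim_partitionP _ _.
apply/fixed_PiP; split; last first.
  by move=> h /[dup] /P_fixed hP /top_partition_fixed hT; apply: part_act_meet.
apply/and3P; split; [exact: preim_partitionP | exact: meet_top_neq_discrete |].
apply: (@neq_indiscrete_part _ _ o0 or).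
by rewrite same_block_meet same_block_preim (negPf top_o0_or) andbF.
Qed.

Lemma fixed_Pi_collapses :
  collapses (chain_complex (@refines n) fixed_Pi) (fun s => s = [set top_partition]).
Proof.
have fixed_Pi_partition P : P \in fixed_Pi -> partition P [set: 'I_n].
  by case/fixed_PiP => /and3P[].
apply: (collapses_to_meet_point (@refines_refl n) (@refines_trans n)
          (meet := fun P => partn_meet P top_partition)).
- move=> P Q /fixed_Pi_partition partP /fixed_Pi_partition partQ /andP[].
  exact: refines_anti.
- by apply/fixed_PiP; split; [exact: top_partition_Pi | exact: top_partition_fixed].
have partT : partition top_partition [set: 'I_n] := preim_partitionP _ _.
move=> P FP; have partP := fixed_Pi_partition P FP; split.
- exact: meet_top_fixed_Pi.
- exact: refines_meetl.
- exact: refines_meetr.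
by move=> W /fixed_Pi_partition partW; apply: refines_meet.
Qed.

Lemma fixed_complexE :
  eq_complex (chain_complex (@refines n) fixed_Pi)
    (fixed_complex (order_complex (@Pi n) (@refines n)) (@part_act n) (@in_wreath_Sn ds n)).
Proof.
move=> s; split=> [/and3P[s0 /subsetP sF /forall_inP s_chain] | [[s0 sPi s_chain] s_fixed]].
  split; last by move=> h h_wreath P /sF /fixed_PiP[_]; apply.
  split=> // [P /sF /fixed_PiP[] // | P Q Ps Qs].
  by have /forall_inP := s_chain P Ps; apply.
apply/and3P; split=> //.
  by apply/subsetP=> P Ps; apply/fixed_PiP; split; [exact: sPi | move=> h /s_fixed; apply].
by apply/forall_inP=> P Ps; apply/forall_inP=> Q Qs; apply: s_chain.
Qed.

End Wreath.

Theorem lemma6p6 (n : nat) (ds : seq nat) :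
  0 < n ->
  1 < size ds ->
  all (fun di => 1 < di) ds ->
  (\prod_(i <- ds) i) %| n ->
  collapsible
    (fixed_complex (order_complex (@Pi n) (@refines n))
                   (@part_act n) (@in_wreath_Sn ds n)).
Proof.
case: ds => [|e ds'] //= n_gt0 ds'_gt0 ds_gt1 d_dvd_n.
exists (top_partition n e ds').
have := fixed_Pi_collapses n_gt0 ds'_gt0 ds_gt1 d_dvd_n.
by apply: collapses_ext => //; apply: fixed_complexE.
Qed.
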